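(* Let $A$ be a real $n\times n$ matrix and let $\mathcal{A} = \begin{pmatrix} 0 & A \\ A^T & 0 \end{pmatrix}$ (a real symmetric $2n\times 2n$ matrix). Then $$e^{\mathcal{A}} = \begin{pmatrix} \cosh\left(\sqrt{AA^T}\right) & A\left(\sqrt{A^TA}\right)^{\dagger}\sinh\left(\sqrt{A^TA}\right) \\ \sinh\left(\sqrt{A^TA}\right)\left(\sqrt{A^TA}\right)^{\dagger}A^T & \cosh\left(\sqrt{A^TA}\right) \end{pmatrix}.$$
   Context: For a symmetric positive semidefinite matrix $M$, $\sqrt{M}$ denotes its unique symmetric positive semidefinite square root, and $\cosh$, $\sinh$ of a symmetric matrix are defined by the usual power series (equivalently via its eigendecomposition). $B^{\dagger}$ denotes the Moore–Penrose generalized inverse of $B$. In the paper $A$ is the adjacency matrix of a directed graph, but the identity is stated for this block matrix built from $A$. *)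

From HB Require Import structures.
From mathcomp Require Import all_boot all_order all_algebra.
From mathcomp Require Import all_classical all_reals all_analysis.
Set Implicit Arguments. Unset Strict Implicit. Unset Printing Implicit Defensive.
Import Order.TTheory GRing.Theory Num.Theory.
Import numFieldNormedType.Exports.
Local Open Scope classical_set_scope.
Local Open Scope ring_scope.

Definition mxseries (R : realType) (n : nat) (c : nat -> R) (M : 'M[R]_n) : 'M[R]_n :=
  limn (series (fun k => c k *: M ^+ k)).

Definition expm (R : realType) (n : nat) (M : 'M[R]_n) : 'M[R]_n :=
  mxseries (fun k => (k`!%:R)^-1) M.

Definition coshm (R : realType) (n : nat) (M : 'M[R]_n) : 'M[R]_n :=
  mxseries (fun k => if odd k then 0 else (k`!%:R)^-1) M.
Definition sinhm (R : realType) (n : nat) (M : 'M[R]_n) : 'M[R]_n :=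
  mxseries (fun k => if odd k then (k`!%:R)^-1 else 0) M.

Definition symmetricmx (R : realType) (n : nat) (M : 'M[R]_n) : Prop := M^T = M.

Definition psdmx (R : realType) (n : nat) (M : 'M[R]_n) : Prop :=
  symmetricmx M /\ forall x : 'cV[R]_n, 0 <= (x^T *m M *m x) 0 0.

Definition sqrtm (R : realType) (n : nat) (M : 'M[R]_n) : 'M[R]_n :=
  xget 0 [set S : 'M[R]_n | psdmx S /\ S *m S = M].

Definition pinvmx_MP (R : realType) (m n : nat) (B : 'M[R]_(m, n)) : 'M[R]_(n, m) :=
  xget 0 [set X : 'M[R]_(n, m) |
    [/\ B *m X *m B = B, X *m B *m X = X,
        (B *m X)^T = B *m X & (X *m B)^T = X *m B]].

From HB Require Import structures.
From mathcomp Require Import all_boot all_order all_algebra.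
From mathcomp Require Import all_classical all_reals all_analysis.
From mathcomp Require Import complex.
From mathcomp Require Import ring lra.
Set Implicit Arguments.
Unset Strict Implicit.
Unset Printing Implicit Defensive.
Import Order.TTheory GRing.Theory Num.Theory.
Import numFieldNormedType.Exports.
Local Open Scope classical_set_scope.
Local Open Scope ring_scope.

(* Let B be the block matrix, S1 = sqrt(A A^T), S2 = sqrt(A^T A) and X = S2^+.
   Since B^2 = diag(A A^T, A^T A), the even powers of B are diag(S1^2j, S2^2j)
   and the odd ones are antidiagonal with blocks (A A^T)^j A = A (A^T A)^j
   = A S2^2j and its transpose.  The Penrose equations give A X S2 = A, because
   A (1 - X S2) has Gram matrix (1 - X S2)^T S2 S2 (1 - X S2) = 0; hence
   A S2^2j = A X S2^(2j+1), and the partial sums of the exponential series of B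
   are block matrices built from partial sums of the cosh and sinh series.
   Passing to the limit blockwise gives the identity.
   The square roots and the pseudo-inverse exist because a real symmetric
   matrix N is annihilated by a split polynomial with simple roots (its
   eigenvalues, real by the spectral theorem), so any function of N can be
   realised as a polynomial in N interpolating it at those roots. *)

Lemma poly_interpolation (F : fieldType) (s : seq F) (g : F -> F) :
  exists p : {poly F}, {in s, forall x, p.[x] = g x}.
Proof.
elim: s => [|a s [p p_s]]; first by exists 0.
have [a_s|a_s] := boolP (a \in s).
  by exists p => x; rewrite in_cons => /predU1P[->|]; apply: p_s.
pose r := \prod_(y <- s) ('X - y%:P).
have r_s x : x \in s -> r.[x] = 0.
  move=> x_s; rewrite horner_prod; apply/eqP; rewrite prodf_seq_eq0.
  by apply/hasP; exists x; rewrite //= hornerXsubC subrr.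
have r_a : r.[a] != 0.
  rewrite horner_prod prodf_seq_neq0; apply/allP => y y_s /=.
  by rewrite hornerXsubC subr_eq0; apply: contraNneq a_s => ->.
exists (p + ((g a - p.[a]) / r.[a]) *: r) => x; rewrite hornerD hornerZ.
rewrite in_cons => /predU1P[->|x_s]; first by rewrite divfK // addrC subrK.
by rewrite (r_s x) // mulr0 addr0 p_s.
Qed.

Lemma horner_mx_eq_on_roots (F : fieldType) n (N : 'M[F]_n.+1) (s : seq F) :
  uniq s -> horner_mx N (\prod_(x <- s) ('X - x%:P)) = 0 ->
  forall p q : {poly F}, {in s, forall x, p.[x] = q.[x]} ->
  horner_mx N p = horner_mx N q.
Proof.
move=> s_uniq N_s p q pq_s; apply/eqP; rewrite -subr_eq0 -rmorphB.
have /dvdpP[r ->] : \prod_(x <- s) ('X - x%:P) %| p - q.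
  apply: uniq_roots_dvdp; last by rewrite uniq_rootsE.
  by apply/allP => x x_s; rewrite rootE !hornerE pq_s // subrr.
by rewrite rmorphM /= N_s mulr0.
Qed.

Lemma trmx_horner_mx (F : comNzRingType) n (N : 'M[F]_n.+1) p :
  (horner_mx N p)^T = horner_mx N^T p.
Proof.
elim/poly_ind: p => [|p c IHp]; first by rewrite !rmorph0 trmx0.
rewrite !rmorphD !rmorphM /= !horner_mx_X !horner_mx_C linearD /= tr_scalar_mx.
by rewrite -!mulmxE trmx_mul IHp (comm_mx_horner p (comm_mx_refl N^T)).
Qed.

Lemma symmetric_mx_split_annihilator (R : rcfType) n (N : 'M[R]_n.+1) :
  N^T = N -> exists s : seq R, uniq s /\ horner_mx N (\prod_(x <- s) ('X - x%:P)) = 0.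
Proof.
move=> N_sym; pose Nc := map_mx (real_complex R) N.
have Nc_herm : Nc \is hermsymmx.
  apply: realsym_hermsym.
    apply/is_hermitianmxP; rewrite expr0 scale1r; apply/matrixP => i j.
    by rewrite !mxE /= -[in LHS]N_sym mxE.
  by apply/mxOverP => i j; rewrite mxE; apply/complex_realP; eexists.
have /orthomx_spectralP Nc_diag := hermitian_normalmx Nc_herm.
have d_real := hermitian_spectral_diag_real Nc_herm.
set d := spectral_diag Nc in Nc_diag d_real.
pose s := undup [seq complex.Re (d 0 i) | i <- enum 'I_n.+1].
exists s; split; first exact: undup_uniq.
apply: (@map_mx_inj _ _ (real_complex R)).
rewrite map_horner_mx map_mx0 -/Nc Nc_diag horner_mx_uconjC ?spectral_unit //.
rewrite horner_mx_diag; set D := map_mx _ d.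
suff -> : D = 0 by rewrite linear0 mulmx0 mul0mx.
apply/matrixP => i j; rewrite (ord1 i) !mxE map_prod_XsubC horner_prod.
apply/eqP; rewrite prodf_seq_eq0; apply/hasP; exists (complex.Re (d 0 j)).
  by rewrite mem_undup; apply/map_f; rewrite mem_enum.
by rewrite /= hornerXsubC RRe_real ?subrr // (mxOverP d_real).
Qed.

Lemma mulmx_trmx_ge0 (R : realDomainType) k (w : 'rV[R]_k) : 0 <= (w *m w^T) 0 0.
Proof. by rewrite mxE sumr_ge0 // => i _; rewrite mxE -expr2 sqr_ge0. Qed.

Lemma trmx_mulmx_eq0 (R : realDomainType) m k (B : 'M[R]_(m, k)) : B^T *m B = 0 -> B = 0.
Proof.
move=> BB0; apply/matrixP => i j; rewrite mxE.
have /eqP := congr1 (fun M : 'M[R]_k => M j j) BB0; rewrite !mxE psumr_eq0.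
  by move=> /allP/(_ i (mem_index_enum _)); rewrite mxE -expr2 sqrf_eq0 => /eqP.
by move=> l _; rewrite mxE -expr2 sqr_ge0.
Qed.

Lemma gram_subr_scalar_unitmx (R : realFieldType) m n (A : 'M[R]_(m, n.+1)) x :
  x < 0 -> A^T *m A - x%:M \in unitmx.
Proof.
move=> x_lt0; rewrite unitmxE unitfE; apply/negP => /det0P[v v_neq0 v_ker].
have vAA : v *m (A^T *m A) = x *: v.
  by apply/eqP; rewrite -subr_eq0 -mul_mx_scalar -mulmxBr v_ker.
have : 0 <= (v *m A^T *m (v *m A^T)^T) 0 0 by apply: mulmx_trmx_ge0.
rewrite trmx_mul trmxK !mulmxA -(mulmxA v) vAA -scalemxAl mxE.
have : 0 < (v *m v^T) 0 0.
  rewrite lt_def mulmx_trmx_ge0 andbT; apply: contraNneq v_neq0 => vv0.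
  rewrite -[v]trmxK (trmx_mulmx_eq0 (B := v^T)) ?trmx0 //.
  by rewrite trmxK [v *m _]mx11_scalar vv0 raddf0.
by move=> vv_gt0; rewrite pmulr_lge0 // leNgt x_lt0.
Qed.

Lemma gram_nonneg_split_annihilator (R : rcfType) m n (A : 'M[R]_(m, n.+1)) :
  exists s : seq R, [/\ uniq s, all (>= 0) s &
    horner_mx (A^T *m A) (\prod_(x <- s) ('X - x%:P)) = 0].
Proof.
have [|s [s_uniq AA_s]] := symmetric_mx_split_annihilator (N := A^T *m A).
  by rewrite trmx_mul trmxK.
exists [seq x <- s | x >= 0]; split; [exact: filter_uniq | exact: filter_all |].
move: AA_s; rewrite (bigID (>= 0)) /= -big_filter rmorphM /=.
set u := horner_mx _ (\prod_(x <- s | _) _) => AA_s.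
have u_unit : u \is a GRing.unit.
  rewrite /u rmorph_prod; apply: unitr_prod => x /= x_lt0.
  by rewrite rmorphB /= horner_mx_X horner_mx_C gram_subr_scalar_unitmx // ltNge.
by rewrite -(mulrK u_unit (horner_mx _ _)) AA_s mul0r.
Qed.

Lemma psd_sqrt_gram_exists (R : realType) m n (A : 'M[R]_(m, n)) :
  exists S : 'M[R]_n, psdmx S /\ S *m S = A^T *m A.
Proof.
case: n A => [|n] A.
  exists 0; split; last by apply/matrixP => [[]].
  by split=> [|x]; [apply/matrixP => [[]] | rewrite mulmx0 mul0mx mxE].
have [s [s_uniq /allP s_ge0 AA_s]] := gram_nonneg_split_annihilator A.
have AA_sym : (A^T *m A)^T = A^T *m A by rewrite trmx_mul trmxK.
have [p2 p2_s] := poly_interpolation s Num.sqrt.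
have [p4 p4_s] := poly_interpolation s (fun x => Num.sqrt (Num.sqrt x)).
pose S := horner_mx (A^T *m A) p2; pose T := horner_mx (A^T *m A) p4.
have SS : S *m S = A^T *m A.
  rewrite mulmxE -rmorphM -[RHS]horner_mx_X /=.
  apply: (horner_mx_eq_on_roots s_uniq AA_s) => x x_s.
  by rewrite hornerM hornerX p2_s // -expr2 sqr_sqrtr // s_ge0.
have TT : T *m T = S.
  rewrite mulmxE -rmorphM; apply: (horner_mx_eq_on_roots s_uniq AA_s) => x x_s.
  by rewrite hornerM p4_s // p2_s // -expr2 sqr_sqrtr // sqrtr_ge0.
have S_sym : S^T = S by rewrite /S trmx_horner_mx AA_sym.
have T_sym : T^T = T by rewrite /T trmx_horner_mx AA_sym.
exists S; split=> //; split=> [|x]; first exact: S_sym.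
rewrite -TT.
have -> : x^T *m (T *m T) *m x = x^T *m T *m (x^T *m T)^T.
  by rewrite trmx_mul trmxK T_sym !mulmxA.
exact: mulmx_trmx_ge0.
Qed.

Lemma symmetric_moore_penrose_exists (R : rcfType) n (S : 'M[R]_n) :
  S^T = S -> exists X : 'M[R]_n,
    [/\ S *m X *m S = S, X *m S *m X = X,
        (S *m X)^T = S *m X & (X *m S)^T = X *m S].
Proof.
case: n S => [|n] S S_sym; first by exists 0; split; apply/matrixP => [[]].
have [s [s_uniq S_s]] := symmetric_mx_split_annihilator S_sym.
(* Interpolating x |-> x^-1 on the spectrum, with 0^-1 = 0 at a zero eigenvalue. *)
have [q q_s] := poly_interpolation s GRing.inv.
have SqS : horner_mx S ('X * q * 'X) = S.
  rewrite -[RHS]horner_mx_X; apply: (horner_mx_eq_on_roots s_uniq S_s) => x x_s.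
  rewrite !hornerM hornerX q_s //.
  by have [->|x_neq0] := eqVneq x 0; rewrite ?mulr0 // mulfV // mul1r.
have qSq : horner_mx S (q * 'X * q) = horner_mx S q.
  apply: (horner_mx_eq_on_roots s_uniq S_s) => x x_s; rewrite !hornerM hornerX q_s //.
  by have [->|x_neq0] := eqVneq x 0; rewrite ?invr0 ?mulr0 // mulVf // mul1r.
have Sq_sym := trmx_horner_mx S ('X * q); have qS_sym := trmx_horner_mx S (q * 'X).
rewrite S_sym !rmorphM /= horner_mx_X in SqS qSq Sq_sym qS_sym.
by exists (horner_mx S q); rewrite !mulmxE.
Qed.

Lemma sqrtm_gram (R : realType) m n (A : 'M[R]_(m, n)) :
  psdmx (sqrtm (A^T *m A)) /\ sqrtm (A^T *m A) *m sqrtm (A^T *m A) = A^T *m A.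
Proof.
apply: (xgetPex 0 (P := [set S | psdmx S /\ S *m S = A^T *m A])).
exact: psd_sqrt_gram_exists.
Qed.

Lemma pinvmx_MP_symmetric (R : realType) n (S : 'M[R]_n) : S^T = S ->
  let X := pinvmx_MP S in
  [/\ S *m X *m S = S, X *m S *m X = X, (S *m X)^T = S *m X & (X *m S)^T = X *m S].
Proof.
move=> S_sym; apply: (xgetPex 0 (P := [set X | [/\ S *m X *m S = S, X *m S *m X = X,
  (S *m X)^T = S *m X & (X *m S)^T = X *m S]])).
exact: symmetric_moore_penrose_exists.
Qed.

Lemma mulmx_pinv_root (R : realDomainType) m n (A : 'M[R]_(m, n)) (S X : 'M[R]_n) :
  S^T = S -> S *m S = A^T *m A -> S *m X *m S = S -> (X *m S)^T = X *m S ->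
  A *m X *m S = A.
Proof.
move=> S_sym SS SXS XS_sym.
have A_ker : A *m (1%:M - X *m S) = 0.
  apply: trmx_mulmx_eq0; rewrite trmx_mul -mulmxA (mulmxA A^T) -SS -mulmxA.
  by rewrite [S *m (1%:M - _)]mulmxBr mulmx1 [S *m (X *m S)]mulmxA SXS subrr !mulmx0.
by move/eqP: A_ker; rewrite mulmxBr mulmx1 subr_eq0 mulmxA => /eqP.
Qed.

Lemma mulmx_root_pinv (R : realDomainType) m n (A : 'M[R]_(m, n)) (S X : 'M[R]_n) :
  S^T = S -> S *m S = A^T *m A -> S *m X *m S = S -> (S *m X)^T = S *m X ->
  S *m X *m A^T = A^T.
Proof.
move=> S_sym SS SXS SX_sym.
have SXtS : S *m X^T *m S = S.
  by move: (congr1 trmx SXS); rewrite !trmx_mul S_sym mulmxA.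
have XtS_sym : (X^T *m S)^T = X^T *m S.
  by rewrite trmx_mul trmxK S_sym -SX_sym trmx_mul S_sym.
move: (congr1 trmx (mulmx_pinv_root S_sym SS SXtS XtS_sym)).
by rewrite !trmx_mul trmxK S_sym mulmxA.
Qed.

Section MatrixNorm.
Variable R : realFieldType.

Lemma normr_mx_le m n (M : 'M[R]_(m, n)) b :
  0 <= b -> (forall i j, `|M i j| <= b) -> `|M| <= b.
Proof.
by move=> b_ge0 Mb; rewrite [leLHS]/Num.Def.normr /= mx_normrE; apply/bigmax_leP.
Qed.

Lemma normr_mx_entry_le m n (M : 'M[R]_(m, n)) i j : `|M i j| <= `|M|.
Proof.
by rewrite [leRHS]/Num.Def.normr /= mx_normrE; apply/bigmax_geP; right; exists (i, j).
Qed.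

Lemma normr_mulmx_le m p q (M : 'M[R]_(m, p)) (N : 'M[R]_(p, q)) :
  `|M *m N| <= p%:R * `|M| * `|N|.
Proof.
apply: normr_mx_le => [|i j]; first by rewrite !mulr_ge0.
rewrite mxE (le_trans (ler_norm_sum _ _ _)) //.
rewrite -mulrA mulr_natl -[p in _ *+ p]card_ord -sumr_const; apply: ler_sum => l _.
by rewrite normrM ler_pM // normr_mx_entry_le.
Qed.

Lemma normr_mx_exp_le n (M : 'M[R]_n) k : `|M ^+ k| <= (n%:R * `|M|) ^+ k.
Proof.
elim: k => [|k IHk].
  rewrite expr0; apply: normr_mx_le => // i j.
  by rewrite mxE; case: eqP; rewrite ?normr1 ?normr0.
rewrite exprS -mulmxE exprS (le_trans (normr_mulmx_le _ _)) //.
by rewrite ler_wpM2l ?mulr_ge0.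
Qed.

Lemma normr_block_mx_le m1 m2 n1 n2 (a : 'M[R]_(m1, n1)) (b : 'M[R]_(m1, n2))
    (c : 'M[R]_(m2, n1)) (d : 'M[R]_(m2, n2)) :
  `|block_mx a b c d| <= `|a| + `|b| + `|c| + `|d|.
Proof.
apply: normr_mx_le => [|i j]; first by rewrite !addr_ge0.
have := (normr_ge0 a, normr_ge0 b, normr_ge0 c, normr_ge0 d).
rewrite -(fintype.splitK i) -(fintype.splitK j) => -[[[? ?] ?] ?].
case: (fintype.split i) => i'; case: (fintype.split j) => j' /=;
  rewrite ?block_mxEul ?block_mxEur ?block_mxEdl ?block_mxEdr;
  apply: le_trans (normr_mx_entry_le _ i' j') _; lra.
Qed.

End MatrixNorm.

Lemma cvg_lipschitz_comp (R : numFieldType) (U V : normedModType R) T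
    (F : set_system T) {FF : Filter F} (g : U -> V) (K : R) (f : T -> U) (a : U) :
  0 <= K -> (forall x y, `|g x - g y| <= K * `|x - y|) ->
  f @ F --> a -> g \o f @ F --> g a.
Proof.
move=> K_ge0 g_lip /cvgrPdist_le f_a; apply/cvgrPdist_le => e e_gt0.
have K1_gt0 : 0 < K + 1 by rewrite ltr_pwDr.
apply: filterS (f_a _ (divr_gt0 e_gt0 K1_gt0)) => t fa_t /=.
apply: le_trans (g_lip _ _) _; apply: le_trans (ler_wpM2l K_ge0 fa_t) _.
by rewrite mulrA ler_pdivrMr // mulrDr mulr1 mulrC lerDl ltW.
Qed.

Section MatrixLimits.
Variables (R : realFieldType) (T : Type) (F : set_system T).
Context {FF : Filter F}.

Lemma cvg_mulmxl m n p (M : 'M[R]_(m, n)) (f : T -> 'M[R]_(n, p)) (a : 'M[R]_(n, p)) :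
  f @ F --> a -> (fun t => M *m f t) @ F --> M *m a.
Proof.
apply: (cvg_lipschitz_comp (g := mulmx M) (K := n%:R * `|M|)) => [|x y].
  exact: mulr_ge0.
by rewrite -mulmxBr normr_mulmx_le.
Qed.

Lemma cvg_mulmxr m n p (M : 'M[R]_(n, p)) (f : T -> 'M[R]_(m, n)) (a : 'M[R]_(m, n)) :
  f @ F --> a -> (fun t => f t *m M) @ F --> a *m M.
Proof.
apply: (cvg_lipschitz_comp (g := mulmxr M) (K := n%:R * `|M|)) => [|x y].
  exact: mulr_ge0.
by rewrite /= -mulmxBl (le_trans (normr_mulmx_le _ _)) // mulrAC.
Qed.

Lemma cvg_block_mx m1 m2 n1 n2 (fa : T -> 'M[R]_(m1, n1)) (fb : T -> 'M[R]_(m1, n2))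
    (fc : T -> 'M[R]_(m2, n1)) (fd : T -> 'M[R]_(m2, n2))
    (a : 'M[R]_(m1, n1)) (b : 'M[R]_(m1, n2)) (c : 'M[R]_(m2, n1)) (d : 'M[R]_(m2, n2)) :
  fa @ F --> a -> fb @ F --> b -> fc @ F --> c -> fd @ F --> d ->
  (fun t => block_mx (fa t) (fb t) (fc t) (fd t)) @ F --> block_mx a b c d.
Proof.
move=> /cvgrPdist_le fa_a /cvgrPdist_le fb_b /cvgrPdist_le fc_c /cvgrPdist_le fd_d.
apply/cvgrPdist_le => e e_gt0; have e4_gt0 : 0 < e / 4 by rewrite divr_gt0.
near=> t; rewrite opp_block_mx add_block_mx (le_trans (normr_block_mx_le _ _ _ _)) //.
rewrite [leRHS](_ : e = e / 4 + e / 4 + e / 4 + e / 4); last by field.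
by rewrite !lerD //; near: t; [exact: fa_a | exact: fb_b | exact: fc_c | exact: fd_d].
Unshelve. all: by end_near.
Qed.

End MatrixLimits.

(* The norm and the completeness of real matrices are declared separately in
   the library; [normed_cvg] needs the combined structure. *)
HB.instance Definition _ (R : realType) m n := Complete.on 'M[R]_(m, n).

Lemma cvg_mxseries (R : realType) n (M : 'M[R]_n) (c : nat -> R) :
  (forall k, `|c k| <= k`!%:R^-1) -> cvgn (series (fun k => c k *: M ^+ k)).
Proof.
move=> c_le; apply: normed_cvg.
apply: (series_le_cvg _ _ _ (is_cvg_series_exp_coeff (n%:R * `|M|))) => k.
- exact: normr_ge0.
- by apply: exp_coeff_ge0; rewrite mulr_ge0.
- by rewrite /exp_coeff /= normrZ mulrC ler_pM // normr_mx_exp_le.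
Qed.

Definition coshm_coef (R : fieldType) (k : nat) : R :=
  if odd k then 0 else k`!%:R^-1.
Definition sinhm_coef (R : fieldType) (k : nat) : R :=
  if odd k then k`!%:R^-1 else 0.

Lemma normr_coshm_coef_le (R : realFieldType) k : `|coshm_coef R k| <= k`!%:R^-1.
Proof. by rewrite /coshm_coef; case: odd; rewrite ?normr0 ?ger0_norm. Qed.

Lemma normr_sinhm_coef_le (R : realFieldType) k : `|sinhm_coef R k| <= k`!%:R^-1.
Proof. by rewrite /sinhm_coef; case: odd; rewrite ?normr0 ?ger0_norm. Qed.

Section AntidiagonalExp.
Variables (R : fieldType) (m n : nat) (A : 'M[R]_(m, n)).
Let B : 'M[R]_(m + n) := block_mx 0 A A^T 0.

Lemma exp_diag_block_mx (P : 'M[R]_m) (Q : 'M[R]_n) j :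
  (block_mx P 0 0 Q : 'M[R]_(m + n)) ^+ j = block_mx (P ^+ j) 0 0 (Q ^+ j).
Proof.
elim: j => [|j IHj]; first by rewrite !expr0 -scalar_mx_block.
by rewrite !exprS IHj -!mulmxE mulmx_block !mulmx0 !mul0mx !addr0 !add0r.
Qed.

Lemma antidiag_exp_even j :
  B ^+ (2 * j) = block_mx ((A *m A^T) ^+ j) 0 0 ((A^T *m A) ^+ j).
Proof.
rewrite exprM expr2 -mulmxE mulmx_block !mulmx0 !mul0mx !addr0 !add0r.
exact: exp_diag_block_mx.
Qed.

Lemma antidiag_exp_odd j :
  B ^+ (2 * j).+1 = block_mx 0 ((A *m A^T) ^+ j *m A) ((A^T *m A) ^+ j *m A^T) 0.
Proof.
by rewrite exprSr antidiag_exp_even -mulmxE mulmx_block !mulmx0 !mul0mx !addr0 !add0r.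
Qed.

Lemma mulmx_exp_gram j : A *m (A^T *m A) ^+ j = (A *m A^T) ^+ j *m A.
Proof.
elim: j => [|j IHj]; first by rewrite !expr0 mulmx1 mul1mx.
by rewrite !exprS -!mulmxE !mulmxA -[A *m A^T *m A *m _]mulmxA IHj mulmxA.
Qed.

Variables (S1 : 'M[R]_m) (S2 X : 'M[R]_n).
Hypotheses (S1S1 : S1 *m S1 = A *m A^T) (S2S2 : S2 *m S2 = A^T *m A).
Hypotheses (AXS : A *m X *m S2 = A) (SXA : S2 *m X *m A^T = A^T).

Lemma antidiag_exp_coef k : k`!%:R^-1 *: B ^+ k =
  block_mx (coshm_coef R k *: S1 ^+ k) (A *m X *m (sinhm_coef R k *: S2 ^+ k))
           ((sinhm_coef R k *: S2 ^+ k) *m X *m A^T) (coshm_coef R k *: S2 ^+ k).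
Proof.
have S1_sqr : S1 ^+ 2 = A *m A^T by rewrite expr2 -S1S1 mulmxE.
have S2_sqr : S2 ^+ 2 = A^T *m A by rewrite expr2 -S2S2 mulmxE.
have [j k_eq] : exists j, k = (2 * j + odd k)%N.
  by exists k./2; rewrite mul2n addnC odd_double_half.
rewrite /coshm_coef /sinhm_coef; case: (odd k) in k_eq *; rewrite k_eq ?addn1 ?addn0.
  rewrite antidiag_exp_odd scale_block_mx !scaler0 !scale0r -!scalemxAr -!scalemxAl.
  congr (block_mx _ (_ *: _) (_ *: _) _).
    by rewrite exprS -mulmxE mulmxA AXS exprM S2_sqr mulmx_exp_gram.
  by rewrite exprSr -mulmxE -!mulmxA (mulmxA S2 X) SXA exprM S2_sqr.
rewrite antidiag_exp_even scale_block_mx !scaler0 !scale0r mulmx0 !mul0mx.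
by rewrite !exprM S1_sqr S2_sqr.
Qed.

Lemma series_antidiag_exp N : series (fun k => k`!%:R^-1 *: B ^+ k) N =
  block_mx (series (fun k => coshm_coef R k *: S1 ^+ k) N)
           (A *m X *m series (fun k => sinhm_coef R k *: S2 ^+ k) N)
           (series (fun k => sinhm_coef R k *: S2 ^+ k) N *m X *m A^T)
           (series (fun k => coshm_coef R k *: S2 ^+ k) N).
Proof.
elim: N => [|N IHN].
  by rewrite !seriesEnat /= !big_mkord !big_ord0 mulmx0 !mul0mx block_mx0.
by rewrite !seriesSr IHN antidiag_exp_coef add_block_mx mulmxDr !mulmxDl.
Qed.

End AntidiagonalExp.

Theorem proposition1 (R : realType) (n : nat) (A : 'M[R]_n) :
  expm (block_mx 0 A A^T 0) =
  block_mx (coshm (sqrtm (A *m A^T)))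
           (A *m pinvmx_MP (sqrtm (A^T *m A)) *m sinhm (sqrtm (A^T *m A)))
           (sinhm (sqrtm (A^T *m A)) *m pinvmx_MP (sqrtm (A^T *m A)) *m A^T)
           (coshm (sqrtm (A^T *m A))).
Proof.
set S1 := sqrtm (A *m A^T); set S2 := sqrtm (A^T *m A); set X := pinvmx_MP S2.
have [_ S1S1] : psdmx S1 /\ S1 *m S1 = A *m A^T by have := sqrtm_gram A^T; rewrite trmxK.
have [[S2_sym _] S2S2] := sqrtm_gram A.
have [SXS _ SX_sym XS_sym] := pinvmx_MP_symmetric S2_sym.
have AXS := mulmx_pinv_root S2_sym S2S2 SXS XS_sym.
have SXA := mulmx_root_pinv S2_sym S2S2 SXS SX_sym.
rewrite /expm /mxseries (funext (series_antidiag_exp S1S1 S2S2 AXS SXA)).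
apply: cvg_lim; first exact: norm_hausdorff.
apply: cvg_block_mx.
- exact: cvg_mxseries (@normr_coshm_coef_le R).
- apply: cvg_mulmxl; exact: cvg_mxseries (@normr_sinhm_coef_le R).
- do 2 apply: cvg_mulmxr; exact: cvg_mxseries (@normr_sinhm_coef_le R).
- exact: cvg_mxseries (@normr_coshm_coef_le R).
Qed.
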